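(* Let $\mathcal{A}\in\mathbb{R}^{m\times m\times n}$ be $(1,2)$-symmetric and let $r_1\le m$, $r_3\le n$. Assume that the solution $(U,V,W)$ of the best rank-$(r_1,r_1,r_3)$ approximation problem for $\mathcal{A}$ is unique (as an equivalence class). Then a representative of the solution can be chosen with $U=V$, and for this representative the core tensor $\mathcal{F}=\mathcal{A}\cdot(U,U,W)$ is $(1,2)$-symmetric.
   Context: A tensor $\mathcal{A}\in\mathbb{R}^{m\times m\times n}$ is $(1,2)$-symmetric if $\mathcal{A}(i,j,k)=\mathcal{A}(j,i,k)$ for all $i,j,k$. Multilinear multiplication: for $\mathcal{H}\in\mathbb{R}^{p\times q\times r}$ and matrices $X\in\mathbb{R}^{l\times p}$, $Y\in\mathbb{R}^{m\times q}$, $Z\in\mathbb{R}^{n\times r}$, $(X,Y,Z)\cdot\mathcal{H}\in\mathbb{R}^{l\times m\times n}$ has entries $\sum_{\alpha,\beta,\gamma}x_{i\alpha}y_{j\beta}z_{k\gamma}h_{\alpha\beta\gamma}$, and $\mathcal{A}\cdot(X,Y,Z):=(X^{T},Y^{T},Z^{T})\cdot\mathcal{A}\in\mathbb{R}^{p\times q\times r}$. The norm is the Frobenius norm $\|\mathcal{A}\|^2=\sum a_{\alpha\beta\gamma}^2$. The best rank-$(r_1,r_2,r_3)$ approximation problem for $\mathcal{A}$ is $\min\|\mathcal{A}-(X,Y,Z)\cdot\mathcal{H}\|$ over $X,Y,Z$ with orthonormal columns ($r_1,r_2,r_3$ columns respectively) and cores $\mathcal{H}\in\mathbb{R}^{r_1\times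 r_2\times r_3}$, equivalently $\max\|\mathcal{A}\cdot(X,Y,Z)\|$ over such $X,Y,Z$; a solution is a triple $(U,V,W)$, with core $\mathcal{F}=\mathcal{A}\cdot(U,V,W)$. A solution is regarded as an equivalence class: $(U,V,W)$ is identified with $(UQ_1,VQ_2,WQ_3)$ for all orthogonal $Q_i\in\mathbb{R}^{r_i\times r_i}$; ''unique solution'' means the equivalence class of maximizers is unique. *)

From HB Require Import structures.
From mathcomp Require Import all_boot all_order all_algebra.
From mathcomp Require Import reals.
Set Implicit Arguments. Unset Strict Implicit. Unset Printing Implicit Defensive.
Import Order.TTheory GRing.Theory Num.Theory.
Local Open Scope ring_scope.

Definition tensor (R : Type) (p q r : nat) := 'I_p -> 'I_q -> 'I_r -> R.

Section Tensors.
Variable R : realType.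

Definition sym12 (m n : nat) (A : tensor R m m n) : Prop :=
  forall (i j : 'I_m) (k : 'I_n), A i j k = A j i k.

(* A . (X,Y,Z) := (X^T, Y^T, Z^T) . A ; entries
   sum_{i,j,k} x_{i a} y_{j b} z_{k c} A(i,j,k). *)
Definition mlmul (l m n p q r : nat) (A : tensor R l m n)
  (X : 'M[R]_(l, p)) (Y : 'M[R]_(m, q)) (Z : 'M[R]_(n, r)) : tensor R p q r :=
  fun a b c => \sum_(i < l) \sum_(j < m) \sum_(k < n)
                 X i a * Y j b * Z k c * A i j k.

Definition tnorm (p q r : nat) (H : tensor R p q r) : R :=
  Num.sqrt (\sum_(a < p) \sum_(b < q) \sum_(c < r) H a b c ^+ 2).

Definition orthonormal_cols (m r : nat) (X : 'M[R]_(m, r)) : Prop :=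
  X^T *m X = 1%:M.

Definition orthogonal_mx (r : nat) (Q : 'M[R]_r) : Prop :=
  Q^T *m Q = 1%:M.

(* (U,V,W) solves the best rank-(r1,r2,r3) approximation problem, in the
   equivalent form  max ||A . (X,Y,Z)||  over orthonormal X,Y,Z. *)
Definition is_solution (m1 m2 m3 r1 r2 r3 : nat) (A : tensor R m1 m2 m3)
  (U : 'M[R]_(m1, r1)) (V : 'M[R]_(m2, r2)) (W : 'M[R]_(m3, r3)) : Prop :=
  [/\ orthonormal_cols U, orthonormal_cols V, orthonormal_cols W &
      forall (X : 'M[R]_(m1, r1)) (Y : 'M[R]_(m2, r2)) (Z : 'M[R]_(m3, r3)),
        orthonormal_cols X -> orthonormal_cols Y -> orthonormal_cols Z ->
        tnorm (mlmul A X Y Z) <= tnorm (mlmul A U V W)].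

Definition equiv_sol (m1 m2 m3 r1 r2 r3 : nat)
  (U : 'M[R]_(m1, r1)) (V : 'M[R]_(m2, r2)) (W : 'M[R]_(m3, r3))
  (U' : 'M[R]_(m1, r1)) (V' : 'M[R]_(m2, r2)) (W' : 'M[R]_(m3, r3)) : Prop :=
  exists (Q1 : 'M[R]_r1) (Q2 : 'M[R]_r2) (Q3 : 'M[R]_r3),
    [/\ orthogonal_mx Q1, orthogonal_mx Q2 & orthogonal_mx Q3] /\
    [/\ U' = U *m Q1, V' = V *m Q2 & W' = W *m Q3].

Definition unique_solution (m1 m2 m3 r1 r2 r3 : nat) (A : tensor R m1 m2 m3) : Prop :=
  (exists (U : 'M[R]_(m1, r1)) (V : 'M[R]_(m2, r2)) (W : 'M[R]_(m3, r3)),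
      is_solution A U V W) /\
  forall (U U' : 'M[R]_(m1, r1)) (V V' : 'M[R]_(m2, r2)) (W W' : 'M[R]_(m3, r3)),
    is_solution A U V W -> is_solution A U' V' W' -> equiv_sol U V W U' V' W'.

End Tensors.

From HB Require Import structures.
From mathcomp Require Import all_boot all_order all_algebra.
From mathcomp Require Import reals.
From mathcomp Require Import ring.
Import Order.TTheory GRing.Theory Num.Theory.
Local Open Scope ring_scope.

(* Two invariances of the objective  (X,Y,Z) |-> ||A . (X,Y,Z)||  drive it:
   - swapping modes 1 and 2: for (1,2)-symmetric A, the core A . (Y,X,Z) is
     the (1,2)-transpose of A . (X,Y,Z), hence has the same norm; so if
     (U,V,W) is a solution, so is (V,U,W);
   - right multiplication of a factor by an orthogonal matrix Q: the core
     changes by an orthogonal transformation of one mode, which preserves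
     the Frobenius norm; so (U,V,W) solution implies (U,VQ,W) solution.
   Given a solution (U,V,W), uniqueness makes (V,U,W) equivalent to it, in
   particular U = V Q for an orthogonal Q.  Hence (U,U,W) = (U,VQ,W) is a
   solution, and its core A . (U,U,W) equals its own (1,2)-transpose. *)

Section MultilinearInvariance.
Context {R : realType}.

Lemma mlmul_swap12 {l n p q r : nat} {A : tensor R l l n} (symA : sym12 A)
    (X : 'M[R]_(l, p)) (Y : 'M[R]_(l, q)) (Z : 'M[R]_(n, r)) a b c :
  mlmul A Y X Z b a c = mlmul A X Y Z a b c.
Proof.
rewrite /mlmul [RHS]exchange_big /=.
apply: eq_bigr => i _; apply: eq_bigr => j _; apply: eq_bigr => k _.
by rewrite symA [Y _ _ * _]mulrC.
Qed.

Lemma tnorm_transpose12 (p r : nat) (H H' : tensor R p p r) :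
  (forall a b c, H' a b c = H b a c) -> tnorm H' = tnorm H.
Proof.
move=> eH; rewrite /tnorm; congr Num.sqrt; rewrite [RHS]exchange_big /=.
by apply: eq_bigr => a _; apply: eq_bigr => b _; apply: eq_bigr => c _;
  rewrite eH.
Qed.

Lemma tnorm_mlmul_swap12 (l n p r : nat) (A : tensor R l l n)
    (X Y : 'M[R]_(l, p)) (Z : 'M[R]_(n, r)) :
  sym12 A -> tnorm (mlmul A X Y Z) = tnorm (mlmul A Y X Z).
Proof.
move=> symA; apply: tnorm_transpose12 => a b c.
by rewrite (mlmul_swap12 symA).
Qed.

Lemma mlmul_mode2_mul (l m n p q r : nat) (A : tensor R l m n)
    (X : 'M[R]_(l, p)) (Y : 'M[R]_(m, q)) (Z : 'M[R]_(n, r)) (Q : 'M[R]_q)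
    a b c :
  mlmul A X (Y *m Q) Z a b c = \sum_(b' < q) Q b' b * mlmul A X Y Z a b' c.
Proof.
rewrite /mlmul.
under [RHS]eq_bigr => b' _ do rewrite mulr_sumr.
rewrite [RHS]exchange_big /=; apply: eq_bigr => i _.
under [RHS]eq_bigr => b' _ do rewrite mulr_sumr.
rewrite [RHS]exchange_big /=; apply: eq_bigr => j _.
under [RHS]eq_bigr => b' _ do rewrite mulr_sumr.
rewrite [RHS]exchange_big /=; apply: eq_bigr => k _.
rewrite mxE mulr_sumr !mulr_suml; apply: eq_bigr => b' _.
by ring.
Qed.

Lemma sumsq_orthogonal {q : nat} {Q : 'M[R]_q} (f : 'I_q -> R) :
  Q *m Q^T = 1%:M ->
  \sum_(b < q) (\sum_(b' < q) Q b' b * f b') ^+ 2 = \sum_(b < q) f b ^+ 2.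
Proof.
move=> QQt; pose v := \row_(b < q) f b.
have vQ_entry b : \sum_(b' < q) Q b' b * f b' = (v *m Q) ord0 b.
  by rewrite mxE; apply: eq_bigr => b' _; rewrite mxE mulrC.
have sumsq_row (w : 'rV[R]_q) :
    \sum_(b < q) w ord0 b ^+ 2 = (w *m w^T) ord0 ord0.
  by rewrite mxE; apply: eq_bigr => b _; rewrite mxE expr2.
under eq_bigr => b _ do rewrite vQ_entry.
rewrite sumsq_row trmx_mul mulmxA -(mulmxA v Q) QQt mulmx1 -sumsq_row.
by apply: eq_bigr => b _; rewrite mxE.
Qed.

Lemma tnorm_mode2_orthogonal (l m n p q r : nat) (A : tensor R l m n)
    (X : 'M[R]_(l, p)) (Y : 'M[R]_(m, q)) (Z : 'M[R]_(n, r)) (Q : 'M[R]_q) :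
  orthogonal_mx Q -> tnorm (mlmul A X (Y *m Q) Z) = tnorm (mlmul A X Y Z).
Proof.
move=> /mulmx1C QQt; rewrite /tnorm; congr Num.sqrt.
apply: eq_bigr => a _; rewrite exchange_big [RHS]exchange_big /=.
apply: eq_bigr => c _; under eq_bigr => b _ do rewrite mlmul_mode2_mul.
by rewrite (sumsq_orthogonal (fun b' => mlmul A X Y Z a b' c) QQt).
Qed.

End MultilinearInvariance.

Section Solutions.
Context {R : realType}.

Lemma is_solution_swap12 {m n r1 r3 : nat} {A : tensor R m m n}
    (symA : sym12 A) (U V : 'M[R]_(m, r1)) (W : 'M[R]_(n, r3)) :
  is_solution A U V W -> is_solution A V U W.
Proof.
move=> [oU oV oW Umax]; split => // X Y Z oX oY oZ.
rewrite tnorm_mlmul_swap12 // [X in _ <= X]tnorm_mlmul_swap12 //.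
exact: Umax.
Qed.

Lemma orthonormal_cols_mulmx (m r : nat) (V : 'M[R]_(m, r)) (Q : 'M[R]_r) :
  orthonormal_cols V -> orthogonal_mx Q -> orthonormal_cols (V *m Q).
Proof.
rewrite /orthonormal_cols /orthogonal_mx => oV oQ.
by rewrite trmx_mul -mulmxA (mulmxA V^T) oV mul1mx.
Qed.

Lemma is_solution_mode2_orthogonal (m1 m2 m3 r1 r2 r3 : nat)
    (A : tensor R m1 m2 m3) (U : 'M[R]_(m1, r1)) (V : 'M[R]_(m2, r2))
    (W : 'M[R]_(m3, r3)) (Q : 'M[R]_r2) :
  orthogonal_mx Q -> is_solution A U V W -> is_solution A U (V *m Q) W.
Proof.
move=> oQ [oU oV oW Umax]; split => //; first exact: orthonormal_cols_mulmx.
by move=> X Y Z oX oY oZ; rewrite tnorm_mode2_orthogonal //; apply: Umax.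
Qed.

End Solutions.

Theorem proposition2p2 (R : realType) (m n r1 r3 : nat)
  (A : tensor R m m n) :
  sym12 A -> (r1 <= m)%N -> (r3 <= n)%N ->
  @unique_solution R m m n r1 r1 r3 A ->
  exists (U : 'M[R]_(m, r1)) (W : 'M[R]_(n, r3)),
    is_solution A U U W /\ sym12 (mlmul A U U W).
Proof.
move=> symA _ _ [[U [V [W sol]]] uniq].
have solVU := is_solution_swap12 symA _ _ _ sol.
(* Uniqueness: (V,U,W) = (U Q1, V Q2, W Q3), so U = V Q2. *)
have [_ [Q2 [_ [[_ oQ2 _] [_ eU _]]]]] := uniq _ _ _ _ _ _ sol solVU.
exists U, W; split.
  by rewrite {2}eU; apply: is_solution_mode2_orthogonal.
by move=> i j k; rewrite (mlmul_swap12 symA).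
Qed.
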